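(* Let $\mathcal{F}$ be a $3$-uniform linear set system with maximum matching size $\nu(\mathcal{F})=\nu$ and maximum degree $\Delta(\mathcal{F})=\Delta$. If $\Delta\geq 5$, then $|\mathcal{F}|\leq 2\Delta\nu$.
   Context: A set system $\mathcal{F}$ is a finite collection of distinct subsets of a vertex set $V$. It is $3$-uniform if every member has exactly $3$ elements, and linear if $|A\cap B|\leq 1$ for all distinct $A,B\in\mathcal{F}$. A matching is a collection of pairwise disjoint members of $\mathcal{F}$; $\nu(\mathcal{F})$ is the maximum size of a matching. For a vertex $x$, $\mathcal{F}_x=\{A\in\mathcal{F}: x\in A\}$, and $\Delta(\mathcal{F})=\max_x|\mathcal{F}_x|$. *)

From mathcomp Require Import all_boot.
Set Implicit Arguments. Unset Strict Implicit. Unset Printing Implicit Defensive.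

Section SetSystems.
Variable V : finType.

Definition uniform3 (F : {set {set V}}) : bool :=
  [forall A in F, #|A| == 3].

Definition linear_sys (F : {set {set V}}) : bool :=
  [forall A in F, forall B in F, (A != B) ==> (#|A :&: B| <= 1)].

Definition is_matching (F M : {set {set V}}) : bool :=
  (M \subset F) &&
  [forall A in M, forall B in M, (A != B) ==> [disjoint A & B]].

Definition nu (F : {set {set V}}) : nat :=
  \max_(M : {set {set V}} | is_matching F M) #|M|.

Definition star (F : {set {set V}}) (x : V) : {set {set V}} :=
  [set A in F | x \in A].

Definition maxdeg (F : {set {set V}}) : nat :=
  \max_(x : V) #|star F x|.
End SetSystems.

From mathcomp Require Import all_boot zify.
Set Implicit Arguments. Unset Strict Implicit. Unset Printing Implicit Defensive.

(* Fix a maximum matching M. Every member B of F meets some member of M, so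
   giving B one token for each member of M it meets, plus a second token to its
   matching member when there is only one, hands out at least 2|F| tokens to M.
   A member A of M gets at most 3Δ - 2 tokens of the first kind, since each of
   its three points has degree at most Δ and A itself is counted three times.
   Of the second kind it gets at most Δ + 2: if two members B, C ≠ A whose only
   matching member is A hit A in distinct points, then B and C must meet, for
   otherwise replacing A by B and C enlarges M; so either all such members pass
   through one point of A (at most Δ - 1 of them), or by linearity at most two
   pass through each point of A (at most 6 ≤ Δ + 1). Hence 2|F| ≤ 4Δν. *)

Lemma not_disjointP (T : finType) (A B : {set T}) :
  reflect (exists2 x, x \in A & x \in B) (~~ [disjoint A & B]).
Proof.
rewrite -setI_eq0; apply: (iffP (set0Pn _)) => [[x]|[x xA xB]].
  by rewrite inE => /andP[]; exists x.
by exists x; rewrite inE xA xB.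
Qed.

Lemma card_set_sum (T : finType) (X : {set T}) (P : pred T) :
  #|[set x in X | P x]| = \sum_(x in X) P x.
Proof.
rewrite -sum1_card big_mkcond [RHS]big_mkcond /=.
by apply: eq_bigr => x _; rewrite inE; case: (x \in X); case: (P x).
Qed.

Lemma sum_card_rel_swap (I J : finType) (X : {set I}) (Y : {set J}) (R : I -> J -> bool) :
  \sum_(x in X) #|[set y in Y | R x y]| = \sum_(y in Y) #|[set x in X | R x y]|.
Proof.
under eq_bigr do rewrite card_set_sum.
by rewrite exchange_big; apply: eq_bigr => y _; rewrite card_set_sum.
Qed.

Lemma card_le_sum_card_rel (I J : finType) (X : {set I}) (Y : {set J}) (R : I -> J -> bool) :
  {in X, forall x, exists2 y, y \in Y & R x y} ->
  #|X| <= \sum_(y in Y) #|[set x in X | R x y]|.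
Proof.
move=> covX; rewrite -sum_card_rel_swap -sum1_card leq_sum // => x /covX[y Yy Rxy].
by apply/card_gt0P; exists y; rewrite inE Yy.
Qed.

Section Matchings.
Variables (V : finType) (F : {set {set V}}).

Lemma matchingP (M : {set {set V}}) :
  reflect (M \subset F /\ {in M &, forall A B : {set V}, A != B -> [disjoint A & B]})
    (is_matching F M).
Proof.
apply: (iffP andP) => [[sMF /forall_inP disM]|[sMF disM]]; split => //.
  by move=> A B AM BM; move: (disM A AM) => /forall_inP/(_ B BM)/implyP.
by apply/forall_inP => A AM; apply/forall_inP => B BM; apply/implyP; apply: disM.
Qed.

Lemma matching_subset (M : {set {set V}}) : is_matching F M -> M \subset F.
Proof. by case/andP. Qed.

Lemma maximum_matching_exists : exists2 M, is_matching F M & #|M| = nu F.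
Proof.
have m0 : is_matching F set0 by apply/matchingP; split=> [|A]; rewrite ?sub0set ?inE.
have [|M mM maxM] := eq_bigmax_cond (fun M : {set {set V}} => #|M|)
  (_ : 0 < #|[pred M | is_matching F M]|); first by apply/card_gt0P; exists set0.
by exists M.
Qed.

Lemma matching_exchange (M D N : {set {set V}}) :
  is_matching F M -> D \subset M -> N \subset F ->
  {in N &, forall B C : {set V}, B != C -> [disjoint B & C]} ->
  {in N, forall B, B != set0} ->
  {in N & M :\: D, forall B A : {set V}, [disjoint A & B]} ->
  #|M| + #|N| <= nu F + #|D|.
Proof.
move=> /matchingP[sMF disM] sDM sNF disN neN disMN.
have match' : is_matching F ((M :\: D) :|: N).
  apply/matchingP; split.
    by rewrite subUset sNF (subset_trans (subsetDl _ _) sMF).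
  move=> A B; rewrite !inE => /orP[/andP[AnD AM]|AN] /orP[/andP[BnD BM]|BN] nAB.
  - exact: disM.
  - by apply: disMN; rewrite // inE AnD AM.
  - by rewrite disjoint_sym; apply: disMN; rewrite // inE BnD BM.
  - exact: disN.
have capMN : (M :\: D) :&: N = set0.
  apply/setP => B; rewrite !inE; apply/negP => /andP[MDB BN].
  have := disMN B B BN; rewrite inE MDB => /(_ isT).
  by rewrite -setI_eq0 setIid (negbTE (neN B BN)).
have : #|(M :\: D) :|: N| <= nu F := leq_bigmax_cond _ match'.
rewrite cardsU capMN cards0 subn0 cardsD (setIidPr sDM).
have := subset_leq_card sDM; lia.
Qed.

End Matchings.

Section LinearSystems.
Variable V : finType.

Lemma uniform3P (F : {set {set V}}) :
  reflect {in F, forall A : {set V}, #|A| = 3} (uniform3 F).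
Proof. by apply: (iffP forall_inP) => card3 A /card3 => [/eqP|->]. Qed.

Lemma linear_sysP (F : {set {set V}}) :
  reflect {in F &, forall A B : {set V}, A != B -> #|A :&: B| <= 1} (linear_sys F).
Proof.
apply: (iffP forall_inP) => [lin A B AF BF|lin A AF].
  by move: (lin A AF) => /forall_inP/(_ B BF)/implyP.
by apply/forall_inP => B BF; apply/implyP; apply: lin.
Qed.

Lemma card_star_le_maxdeg (F : {set {set V}}) x : #|star F x| <= maxdeg F.
Proof. exact: leq_bigmax. Qed.

End LinearSystems.

Section MaximumMatching.
Variables (V : finType) (F : {set {set V}}).
Hypothesis card_edge : {in F, forall A : {set V}, #|A| = 3}.
Hypothesis linF : {in F &, forall A B : {set V}, A != B -> #|A :&: B| <= 1}.

Lemma edge_neq0 B : B \in F -> B != set0.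
Proof. by move=> BF; rewrite -card_gt0 card_edge. Qed.

Lemma linear_common_point (A B : {set V}) x y : A \in F -> B \in F -> A != B ->
  x \in A -> y \in A -> x \in B -> y \in B -> x = y.
Proof.
move=> AF BF nAB xA yA xB yB; apply/eqP; apply: contraLR (linF AF BF nAB).
rewrite -ltnNge => nxy.
have sxyAB : [set x; y] \subset A :&: B.
  by apply/subsetP => z; rewrite !inE => /orP[]/eqP->; rewrite ?xA ?xB ?yA ?yB.
by apply: leq_trans (subset_leq_card sxyAB); rewrite cards2 nxy.
Qed.

Lemma card_meeting_le A : A \in F ->
  #|[set B in F | ~~ [disjoint A & B]]| + 2 <= 3 * maxdeg F.
Proof.
move=> AF; have sum_star : \sum_(x in A) #|star F x| <= 3 * maxdeg F.
  by rewrite -(card_edge AF) -sum_nat_const leq_sum // => x _; apply: card_star_le_maxdeg.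
apply: leq_trans sum_star; rewrite /star (sum_card_rel_swap A F (fun x B => x \in B)).
rewrite card_set_sum (bigD1 A AF) [X in _ <= X](bigD1 A AF) /=.
have [x xA] : exists x, x \in A by apply/card_gt0P; rewrite card_edge.
have -> : ~~ [disjoint A & A] by apply/not_disjointP; exists x.
rewrite (_ : [set x in A | x \in A] = A) ?card_edge //; last first.
  by apply/setP => y; rewrite inE andbb.
rewrite addnAC leq_add2l leq_sum // => B _.
by case: not_disjointP => // -[y yA yB]; apply/card_gt0P; exists y; rewrite inE yA.
Qed.

Variable M : {set {set V}}.
Hypotheses (matchM : is_matching F M) (maxM : #|M| = nu F).

Definition hits (B : {set V}) := [set A in M | ~~ [disjoint A & B]].

Definition private (A : {set V}) := [set B in F | hits B == [set A]].

Lemma hits_neq0 B : B \in F -> hits B != set0.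
Proof.
move=> BF; apply/eqP => hits0.
suff: #|M| + #|[set B]| <= nu F + #|(set0 : {set {set V}})|.
  by rewrite -maxM cards1 cards0 addn0 addn1 ltnn.
apply: matching_exchange; rewrite ?sub0set ?sub1set //.
- by move=> C D /set1P-> /set1P->; rewrite eqxx.
- by move=> C /set1P->; apply: edge_neq0.
- move=> C A /set1P-> /setDP[AM _]; apply/negPn/negP => meetAB.
  by have := in_set0 A; rewrite -hits0 inE AM meetAB.
Qed.

Lemma privateP A B : B \in private A ->
  [/\ B \in F, A \in M, ~~ [disjoint A & B] &
      {in M, forall A', A' != A -> [disjoint A' & B]}].
Proof.
rewrite inE => /andP[BF /eqP hitsB].
have := set11 A; rewrite -hitsB inE => /andP[AM meetAB]; split=> // A' A'M nA'A.
apply/negPn/negP => meetA'B; have : A' \in hits B by rewrite inE A'M.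
by rewrite hitsB inE (negbTE nA'A).
Qed.

Lemma private_meet A B C u v : B \in private A :\ A -> C \in private A :\ A ->
  u \in A -> v \in A -> u \in B -> v \in C -> u != v -> ~~ [disjoint B & C].
Proof.
move=> /setD1P[nBA /privateP[BF AM _ onlyB]] /setD1P[nCA /privateP[CF _ _ onlyC]].
move=> uA vA uB vC nuv; apply/negP => disBC.
have AF : A \in F by apply: (subsetP (matching_subset matchM)).
have nBC : B != C.
  apply: contraNneq nuv => eBC; rewrite -eBC in vC.
  by apply/eqP; apply: (linear_common_point BF AF nBA).
suff: #|M| + #|[set B; C]| <= nu F + #|[set A]|.
  by rewrite -maxM cards1 cards2 nBC leq_add2l.
apply: matching_exchange; rewrite ?sub1set //.
- by apply/subsetP => X /set2P[]->.
- move=> X Y /set2P[]-> /set2P[]->; rewrite ?eqxx // => _.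
  by rewrite disjoint_sym.
- by move=> X /set2P[]->; apply: edge_neq0.
- by move=> X A' /set2P[]-> /setD1P[nA'A A'M]; [apply: onlyB | apply: onlyC].
Qed.

Lemma private_foot_uniq A C x y : C \in private A :\ A ->
  x \in A -> y \in A -> x \in C -> y \in C -> x = y.
Proof.
move=> /setD1P[nCA /privateP[CF AM _ _]]; apply: (linear_common_point _ CF).
  exact: (subsetP (matching_subset matchM)).
by rewrite eq_sym.
Qed.

(* Each C counted here meets B0 in a point of B0 :\ u0, and by linearity distinct
   such C meet B0 in distinct points. *)
Lemma card_private_through A B0 u0 w : B0 \in private A :\ A ->
  u0 \in A -> w \in A -> u0 \in B0 -> u0 != w ->
  #|[set C in private A :\ A | w \in C]| <= 2.
Proof.
move=> B0T u0A wA u0B0 nu0w.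
have [_ /privateP[B0F _ _ _]] := setD1P B0T.
have <- : #|B0 :\ u0| = 2 by move: (cardsD1 u0 B0); rewrite u0B0 card_edge // => -[].
apply: (leq_trans (card_le_sum_card_rel (Y := B0 :\ u0)
  (R := fun (C : {set V}) y => y \in C) _)).
  move=> C; rewrite inE => /andP[CT wC].
  have /not_disjointP[y yB0 yC] := private_meet B0T CT u0A wA u0B0 wC nu0w.
  exists y => //; rewrite !inE yB0 andbT; apply: contraNneq nu0w => yu0.
  by apply/eqP; apply: (private_foot_uniq CT) => //; rewrite -yu0.
rewrite -sum1_card leq_sum // => y /setD1P[_ yB0].
apply/card_le1_eqP => C1 C2.
move=> /setIdP[/setIdP[/setD1P[_ /privateP[C1F _ _ _]] wC1] yC1].
move=> /setIdP[/setIdP[/setD1P[_ /privateP[C2F _ _ _]] wC2] yC2].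
apply/eqP; apply: contraNT nu0w => nC12.
have wy : w = y := linear_common_point C2F C1F nC12 wC2 yC2 wC1 yC1.
by apply/eqP; apply: (private_foot_uniq B0T) => //; rewrite wy.
Qed.

Lemma private_meets A C : C \in private A :\ A -> exists2 x, x \in A & x \in C.
Proof. by case/setD1P => _ /privateP[_ _ /not_disjointP]. Qed.

Lemma card_private_le A : A \in M -> 5 <= maxdeg F -> #|private A| <= maxdeg F + 2.
Proof.
move=> AM D5; have AF : A \in F by apply: (subsetP (matching_subset matchM)).
have sub : private A \subset A |: (private A :\ A).
  by apply/subsetP => B BA; rewrite in_setU1 in_setD1 BA andbT orbN.
apply: (leq_trans (subset_leq_card sub)); rewrite cardsU1.
suff : #|private A :\ A| <= (maxdeg F).+1 by case: (A \notin _); lia.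
have [->|[B0 B0T]] := set_0Vmem (private A :\ A); first by rewrite cards0.
have [x0 x0A x0B0] := private_meets B0T.
have [concurrent|] := boolP [forall (C | C \in private A :\ A), x0 \in C].
  have sub_star : private A :\ A \subset star F x0 :\ A.
    apply/subsetP => C CT; have [nCA /privateP[CF _ _ _]] := setD1P CT.
    by rewrite !inE nCA CF (forall_inP concurrent C CT).
  apply: (leq_trans (subset_leq_card sub_star)).
  have := card_star_le_maxdeg F x0.
  by rewrite (cardsD1 A) inE AF x0A add1n => /ltnW/leqW.
case/forall_inPn => C CT x0nC; have [v vA vC] := private_meets CT.
have nvx0 : v != x0 by apply: contraNneq x0nC => <-.
apply: (leq_trans (card_le_sum_card_rel (Y := A)
  (R := fun (C : {set V}) w => w \in C) _)).
  by move=> C' /private_meets[w wA wC']; exists w.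
apply: (@leq_trans (\sum_(w in A) 2)).
  apply: leq_sum => w wA; have [->|nwx0] := eqVneq w x0.
    exact: card_private_through CT vA x0A vC nvx0.
  by apply: card_private_through B0T x0A wA x0B0 _; rewrite eq_sym.
by rewrite sum_nat_const card_edge //; lia.
Qed.

Lemma card_private_owners B : B \in F ->
  #|[set A in M | hits B == [set A]]| = (#|hits B| == 1).
Proof.
move=> BF; have [/eqP/cards1P[A hitsB]|n1] := eqVneq #|hits B| 1; last first.
  apply/eqP; rewrite cards_eq0; apply/eqP/setP => A.
  by rewrite !inE; apply: contraNF n1 => /andP[_ /eqP->]; rewrite cards1.
have AM : A \in M by have := set11 A; rewrite -hitsB inE => /andP[].
rewrite (_ : [set A' in M | hits B == [set A']] = [set A]) ?cards1 //.
apply/setP => A'; rewrite !inE hitsB (inj_eq set1_inj) eq_sym.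
by case: (A' =P A) => [->|]; rewrite ?andbT ?andbF.
Qed.

Lemma twice_card_le :
  2 * #|F| <= \sum_(A in M) (#|[set B in F | ~~ [disjoint A & B]]| + #|private A|).
Proof.
rewrite big_split /= (sum_card_rel_swap M F (fun A B => ~~ [disjoint A & B])).
rewrite (sum_card_rel_swap M F (fun A B => hits B == [set A])) -big_split /=.
rewrite -sum1_card big_distrr /= leq_sum // => B BF.
rewrite card_private_owners // muln1 -/(hits B).
have := hits_neq0 BF; rewrite -card_gt0; case: eqP => [-> //|/eqP n1 h0].
by rewrite addn0 ltn_neqAle eq_sym n1.
Qed.

End MaximumMatching.

Theorem theorem1 (V : finType) (F : {set {set V}}) :
  uniform3 F -> linear_sys F -> 5 <= maxdeg F ->
  #|F| <= 2 * maxdeg F * nu F.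
Proof.
move=> /uniform3P card_edge /linear_sysP linF D5.
have [M matchM maxM] := maximum_matching_exists F.
have per_edge A : A \in M ->
    #|[set B in F | ~~ [disjoint A & B]]| + #|private F M A| <= 4 * maxdeg F.
  move=> AM; have AF : A \in F by apply: (subsetP (matching_subset matchM)).
  have := card_meeting_le card_edge AF.
  have := card_private_le card_edge linF matchM maxM AM D5; lia.
rewrite -maxM -(leq_pmul2l (_ : 0 < 2)) //.
apply: (leq_trans (twice_card_le card_edge matchM maxM)).
apply: (leq_trans (leq_sum _ per_edge)).
rewrite sum_nat_const; lia.
Qed.
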